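(* For $P\ge2$ and all integers $n>2$, $\beta_P(n)=\prod_{p\le P}\beta_{(p)}(n)$, where \[ \beta_P(n)=\sum_{\substack{d,v\ge1:\ dv^2=n^2-4\\ p\mid v\Rightarrow p\le P}}\frac1v\prod_{p\le P}\Big(1-\frac{\chi_d(p)}{p}\Big)^{-1},\qquad \beta_{(p)}(n)=\sum_{b\ge0}\frac1{p^b}\Big(1-\frac1p\chi_{(n^2-4)p^{-2b}}(p)\Big)^{-1}I_{p^b}(n), \] with $p$ denoting primes.
   Context: Sums over $d$ run over positive non-square discriminants, i.e. positive integers $d$, not perfect squares, with $d\equiv0,1\pmod4$; $v$ runs over positive integers. For such $d$, $\chi_d:\mathbb{Z}\to\{0,\pm1\}$ is the completely multiplicative function with: for odd primes $p$, $\chi_d(p)=0$ if $p\mid d$, $1$ if $p\nmid d$ and $x^2\equiv d\pmod p$ is solvable, $-1$ if insolvable; $\chi_d(2)=1,-1,0$ according as $d\equiv1\pmod 8$, $d\equiv5\pmod8$, $d\equiv0\pmod4$; $\chi_d(-1)=1$. For a prime $p$, $b\in\mathbb{N}_0$ and $n\in\mathbb{Z}$: $I_{p^b}(n)=1$ if $n^2\equiv4\pmod{p^{2b}}$ and, in case $p=2$, additionally $(n^2-4)2^{-2b}\equiv0,1\pmod 4$; otherwise $I_{p^b}(n)=0$. (The term of $\beta_{(p)}(n)$ with $I_{p^b}(n)=0$ is $0$; when $I_{p^b}(n)=1$, $(n^2-4)p^{-2b}$ is a positive non-square discriminant.) *)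

From mathcomp Require Import all_boot all_order all_algebra.
Set Implicit Arguments. Unset Strict Implicit. Unset Printing Implicit Defensive.
Import Order.TTheory GRing.Theory Num.Theory.

Definition is_disc (d : nat) : bool :=
  [&& 0 < d, ~~ [exists x : 'I_d.+1, (x : nat) ^ 2 == d] & (d %% 4 \in [:: 0; 1])].

(* chi_d evaluated at a prime p (the only arguments used in the statement). *)
Definition chi (d p : nat) : int :=
  if p == 2 then
    (if (d %% 8 == 1)%N then 1 else if (d %% 8 == 5)%N then -1 else 0)%R
  else if (p %| d)%N then 0%R
  else if [exists x : 'I_p, ((x : nat) ^ 2 == d %[mod p])%N] then 1%R else (-1)%R.

Definition Iind (p b n : nat) : bool :=
  (n ^ 2 == 4 %[mod p ^ (2 * b)]) &&
  ((p == 2) ==> (((n ^ 2 - 4) %/ 2 ^ (2 * b)) %% 4 \in [:: 0; 1])).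

Local Open Scope ring_scope.

Definition efac (d p : nat) : rat := (1 - (chi d p)%:~R / p%:R)^-1.

(* beta_P(n): all d,v >= 1 with d v^2 = n^2 - 4 satisfy d, v < n^2 (for n > 2),
   so the range below captures the full (finite) sum. *)
Definition betaP (P n : nat) : rat :=
  \sum_(1 <= v < n ^ 2) \sum_(1 <= d < n ^ 2)
    if [&& d * v ^ 2 == n ^ 2 - 4, is_disc d & all (fun q => q <= P) (primes v)]%N
    then (v%:R)^-1 * \prod_(p < P.+1 | prime p) efac d p
    else 0.

(* beta_(p)(n): terms with I_{p^b}(n) = 1 need p^(2b) | n^2-4, forcing b < n^2;
   all other terms vanish, so the truncation is exact. *)
Definition betaLoc (p n : nat) : rat :=
  \sum_(0 <= b < n ^ 2)
    if Iind p b n then ((p ^ b)%:R)^-1 * efac ((n ^ 2 - 4) %/ p ^ (2 * b)) p else 0.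

(* Expanding the product of the local sums gives one term for each exponent
   vector (b_p)_(p <= P), i.e. for each P-smooth v = prod p^(b_p); the term
   vanishes unless v^2 | n^2 - 4, which in particular forces v < n^2.  For such
   v put d = (n^2 - 4) / v^2.  Then (n^2 - 4) / p^(2 b_p) = d w^2 with p not
   dividing w, so chi_(d w^2)(p) = chi_d(p), and for p = 2 the extra condition
   in I_(2^b)(n) becomes d = 0, 1 (mod 4) because odd squares are 1 mod 8.
   Since n^2 - 4 is never a square when n > 2, d is automatically a positive
   non-square, so the product of the local terms is the v-term of beta_P(n). *)

From mathcomp Require Import all_boot all_order all_algebra.
From mathcomp Require Import cyclic zify.
Import Order.TTheory GRing.Theory Num.Theory.

Set Implicit Arguments.
Unset Strict Implicit.
Unset Printing Implicit Defensive.

Lemma sqr_odd_mod8 w : odd w -> w ^ 2 = 1 %[mod 8].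
Proof.
move=> w_odd; rewrite -modnXm.
have : odd (w %% 8) by rewrite odd_mod.
have : w %% 8 < 8 by rewrite ltn_mod.
by move: (w %% 8) => r; do 8! case: r => [|r] //.
Qed.

Lemma mulsq_odd_mod4 d w : odd w -> d * w ^ 2 = d %[mod 4].
Proof.
by move=> w_odd; rewrite -modnMmr -(@modn_dvdm 8 (w ^ 2)) // sqr_odd_mod8 // muln1.
Qed.

Lemma sqr_mod_mulsq m d w : 0 < m -> coprime w m ->
  [exists x : 'I_m, x ^ 2 == d * w ^ 2 %[mod m]] =
  [exists x : 'I_m, x ^ 2 == d %[mod m]].
Proof.
move=> m_gt0 co_wm.
have w_inv : w * w ^ (totient m).-1 = 1 %[mod m].
  by rewrite -expnS prednK ?totient_gt0 // Euler_exp_totient.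
apply/existsP/existsP => -[x /eqP x_sq].
  exists (Ordinal (ltn_pmod (x * w ^ (totient m).-1) m_gt0)); apply/eqP => /=.
  rewrite modnXm expnMn -modnMml x_sq modnMml -mulnA -expnMn.
  by rewrite -modnMmr -modnXm w_inv modnXm modnMmr muln1.
exists (Ordinal (ltn_pmod (x * w) m_gt0)); apply/eqP => /=.
by rewrite modnXm expnMn -modnMml x_sq modnMml.
Qed.

Lemma chi_mulsq d w p : prime p -> ~~ (p %| w) -> chi (d * w ^ 2) p = chi d p.
Proof.
move=> p_pr p_w; rewrite /chi; case: eqP => [p2 | _].
  by rewrite -modnMmr sqr_odd_mod8 ?muln1 //; move: p_w; rewrite p2 dvdn2 negbK.
rewrite Euclid_dvdM // Euclid_dvdX // (negbTE p_w) orbF.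
by rewrite sqr_mod_mulsq ?prime_gt0 // coprime_sym prime_coprime.
Qed.

Lemma sqrn_sub4_gt0 n : 2 < n -> 0 < n ^ 2 - 4.
Proof. by move=> n_gt2; rewrite subn_gt0; nia. Qed.

Lemma sqr_neq_sqrn_sub4 n y : 2 < n -> y ^ 2 != n ^ 2 - 4.
Proof.
move=> n_gt2; apply/eqP => y_sq.
have [y_lt_n | n_le_y] := ltnP y n.
  have : y.+1 ^ 2 <= n ^ 2 by rewrite leq_exp2r.
  nia.
have : n ^ 2 <= y ^ 2 by rewrite leq_exp2r.
nia.
Qed.

Lemma is_discE n d v : 2 < n -> d * v ^ 2 = n ^ 2 - 4 ->
  is_disc d = (d %% 4 \in [:: 0; 1]).
Proof.
move=> n_gt2 dv; rewrite /is_disc.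
have -> : 0 < d.
  by case: d dv => // dv; move: (sqrn_sub4_gt0 n_gt2); rewrite -dv.
suff -> : [exists x : 'I_d.+1, x ^ 2 == d] = false by [].
apply/negbTE/existsP => -[x /eqP x_sq].
by move: (sqr_neq_sqrn_sub4 (x * v) n_gt2); rewrite expnMn x_sq dv eqxx.
Qed.

Lemma IindE p b n : 2 < n ->
  Iind p b n = (p ^ (2 * b) %| n ^ 2 - 4) &&
               ((p == 2) ==> (((n ^ 2 - 4) %/ 2 ^ (2 * b)) %% 4 \in [:: 0; 1])).
Proof.
by move=> n_gt2; rewrite /Iind eqn_mod_dvd // ltnW // -subn_gt0 sqrn_sub4_gt0.
Qed.

Section SmoothNumbers.

Variable P : nat.
Implicit Type e : 'I_P.+1 -> nat.

Lemma prod_primes_logn v :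
  [pred q | q <= P].-nat v -> v = \prod_(p < P.+1 | prime p) p ^ logn p v.
Proof.
move=> v_smooth; have /andP[v_gt0 _] := v_smooth.
rewrite -{1}(part_pnat_id v_smooth) (widen_partn _ (leq_maxl v P)).
rewrite -(big_mkord (fun p => prime p) (fun p => p ^ logn p v)).
rewrite (@big_nat_widen _ _ _ 0 P.+1 (maxn v P).+1) ?ltnS ?leq_maxr //.
rewrite big_mkcond [RHS]big_mkcond; apply: eq_bigr => p _; rewrite inE -ltnS.
case: ltnP => _; rewrite ?andbT ?andbF //.
by case: ifP => // p_npr; rewrite lognE p_npr.
Qed.

Lemma logn_prod_primes e (q : 'I_P.+1) : prime q ->
  logn q (\prod_(p < P.+1 | prime p) p ^ e p) = e q.
Proof.
move=> q_pr; have pos (p : 'I_P.+1) : prime p -> 0 < p ^ e p.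
  by rewrite expn_gt0 => /prime_gt0->.
rewrite (bigD1 q) //= lognM ?pos ?prodn_cond_gt0 // => [|p /andP[/pos //]].
rewrite pfactorK // logn_coprime ?addn0 //.
apply: (big_ind (coprime q)) => [|a b|p /andP[p_pr q_neq_p]].
- exact: coprimen1.
- by rewrite coprimeMr => ->.
- rewrite coprimeXr // prime_coprime // dvdn_prime2 //.
  by apply: contra q_neq_p => /eqP/val_inj->.
Qed.

Lemma pnat_prod_primes e :
  [pred q | q <= P].-nat (\prod_(p < P.+1 | prime p) p ^ e p).
Proof.
apply: (big_ind (pnat [pred q | q <= P])) => [|a b|p p_pr]; first by [].
  by rewrite pnatM => ->.
by rewrite pnatX pnatE // inE -ltnS ltn_ord.
Qed.

Lemma sqr_dvdn_logn v N : [pred q | q <= P].-nat v ->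
  (v ^ 2 %| N) = [forall p : 'I_P.+1, prime p ==> (p ^ (2 * logn p v) %| N)].
Proof.
move=> v_smooth; have /andP[v_gt0 _] := v_smooth.
apply/idP/forallP => [vN p | pN].
  apply/implyP => p_pr; apply: dvdn_trans vN.
  by rewrite mulnC expnM dvdn_exp2r // pfactor_dvdnn.
have v2_gt0 : 0 < v ^ 2 by rewrite expn_gt0 v_gt0.
apply/(dvdn_partP _ v2_gt0).
move=> p; rewrite mem_primes => /and3P[p_pr _ p_v].
have p_le_P : p <= P.
  move/(pnatP _ v_gt0): v_smooth => /(_ p p_pr); apply.
  by move: p_v; rewrite Euclid_dvdX // => /andP[].
by have := pN (inord p); rewrite inordK ?ltnS // p_pr p_part lognX.
Qed.

Variable N : nat.

Definition logn_ffun (v : nat) : {ffun 'I_P.+1 -> 'I_N.+1} :=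
  [ffun p : 'I_P.+1 => if prime p then inord (logn p v) else ord0].

Definition prime_family :=
  pfamily (ord0 : 'I_N.+1) (fun p : 'I_P.+1 => prime p) (fun _ _ => true).

Lemma logn_ffunE v (p : 'I_P.+1) : 0 < v <= N -> prime p ->
  logn_ffun v p = logn p v :> nat.
Proof.
case/andP=> v_gt0 v_le_N p_pr; rewrite ffunE p_pr inordK //.
exact: ltnW (leq_trans (ltn_logl p v_gt0) v_le_N).
Qed.

Lemma logn_ffun_family v : logn_ffun v \in prime_family.
Proof.
apply/pfamilyP; split => //; apply/supportP => p.
by rewrite ffunE; case: ifP => // p_pr; rewrite unfold_in /= p_pr.
Qed.

Lemma logn_ffun_prod f : f \in prime_family ->
  logn_ffun (\prod_(p < P.+1 | prime p) p ^ f p) = f.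
Proof.
case/pfamilyP=> /supportP f_supp _; apply/ffunP => p; rewrite ffunE.
case: ifP => p_pr; first by apply: val_inj; rewrite /= logn_prod_primes // inord_val.
by rewrite f_supp // unfold_in /= p_pr.
Qed.

End SmoothNumbers.

Local Open Scope ring_scope.

Lemma prod_sum_smooth (R : comPzSemiRingType) P N (g : nat -> nat -> R) :
  (forall e : 'I_P.+1 -> nat, (forall p : 'I_P.+1, prime p -> g p (e p) != 0) ->
     (\prod_(p < P.+1 | prime p) p ^ e p < N)%N) ->
  \prod_(p < P.+1 | prime p) \sum_(b < N) g p b =
  \sum_(v < N | [pred q | (q <= P)%N].-nat v) \prod_(p < P.+1 | prime p) g p (logn p v).
Proof.
case: N => [|N] supp_small.
  rewrite big_ord0; have [p p_pr | no_prime] := pickP (fun p : 'I_P.+1 => prime p).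
    by rewrite (bigD1 p) //= big_ord0 mul0r.
  suff : (\prod_(p < P.+1 | prime p) p ^ 0 < 0)%N by [].
  by apply: supp_small => p; rewrite no_prime.
pose F (f : {ffun 'I_P.+1 -> 'I_N.+1}) := \prod_(p < P.+1 | prime p) g p (f p).
pose G (v : nat) := \prod_(p < P.+1 | prime p) g p (logn p v).
pose v_of (f : {ffun 'I_P.+1 -> 'I_N.+1}) : 'I_N.+1 :=
  inord (\prod_(p < P.+1 | prime p) p ^ f p)%N.
have logn_ffunK (v : 'I_N.+1) : [pred q | (q <= P)%N].-nat v ->
    v_of (logn_ffun P N v) = v /\ F (logn_ffun P N v) = G v.
  move=> v_smooth; have /andP[v_gt0 _] := v_smooth.
  have v_range : (0 < v <= N)%N by rewrite v_gt0 -ltnS ltn_ord.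
  have logn_v p := @logn_ffunE P N v p v_range.
  split; last by apply: eq_bigr => p /logn_v ->.
  rewrite /v_of (eq_bigr _ (fun p p_pr => congr1 _ (logn_v p p_pr))).
  by rewrite -(prod_primes_logn v_smooth) inord_val.
have v_ofK f : f \in prime_family P N -> F f != 0 ->
    [/\ logn_ffun P N (v_of f) = f, [pred q | (q <= P)%N].-nat (v_of f)
       & G (v_of f) = F f].
  move=> f_fam Ff.
  have v_ofE : v_of f = (\prod_(p < P.+1 | prime p) p ^ f p)%N :> nat.
    rewrite inordK // supp_small // => p p_pr.
    by apply: contraNneq Ff => gp0; rewrite /F (bigD1 p) //= gp0 mul0r.
  rewrite v_ofE; split; [exact: logn_ffun_prod | exact: pnat_prod_primes |].
  by apply: eq_bigr => p p_pr; rewrite logn_prod_primes.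
rewrite (big_distr_big_dep ord0) /=.
rewrite [LHS](bigID (fun f => F f != 0)) [RHS](bigID (fun v : 'I_N.+1 => G v != 0)) /=.
rewrite [X in _ + X]big1 ?[X in _ = _ + X]big1 ?addr0; last 2 first.
- by move=> v /andP[_ /negPn/eqP].
- by move=> f /andP[_ /negPn/eqP].
rewrite [RHS](reindex_onto v_of (logn_ffun P N)) => [|v /andP[v_smooth _]]; last first.
  by case: (logn_ffunK v v_smooth).
apply: eq_big => [f | f /andP[f_fam Ff]]; last by case: (v_ofK f f_fam Ff).
apply/andP/andP => [[f_fam Ff] | [/andP[v_smooth Gv] /eqP fK]].
  by case: (v_ofK f f_fam Ff) => -> -> ->; rewrite eqxx.
by rewrite -fK logn_ffun_family; case: (logn_ffunK _ v_smooth) => _ ->.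
Qed.

Definition betaLoc_term (p n b : nat) : rat :=
  if Iind p b n then ((p ^ b)%:R)^-1 * efac ((n ^ 2 - 4) %/ p ^ (2 * b)) p else 0.

Definition betaP_term (P n v : nat) : rat :=
  \sum_(1 <= d < n ^ 2)
    if (d * v ^ 2 == n ^ 2 - 4)%N && is_disc d
    then (v%:R)^-1 * \prod_(p < P.+1 | prime p) efac d p
    else 0.

Lemma betaP_smooth P n : (0 < n)%N ->
  betaP P n = \sum_(v < n ^ 2 | [pred q | (q <= P)%N].-nat v) betaP_term P n v.
Proof.
move=> n_gt0; rewrite -big_mkord big_mkcond big_ltn ?expn_gt0 ?n_gt0 //=.
rewrite add0r; apply: eq_big_nat => v /andP[v_gt0 _].
have -> : [pred q | (q <= P)%N].-nat v = all (fun q => q <= P)%N (primes v).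
  by rewrite /pnat v_gt0.
case: ifP => _; first by apply: eq_bigr => d _; rewrite andbT.
by rewrite big1 // => d _; rewrite !andbF.
Qed.

Lemma betaP_termE P n v : (2 < n)%N -> (0 < v)%N -> (v ^ 2 %| n ^ 2 - 4)%N ->
  betaP_term P n v =
    if is_disc ((n ^ 2 - 4) %/ v ^ 2)
    then (v%:R)^-1 * \prod_(p < P.+1 | prime p) efac ((n ^ 2 - 4) %/ v ^ 2) p
    else 0.
Proof.
move=> n_gt2 v_gt0 v_dvd; set d := (_ %/ _)%N.
have dv : (d * v ^ 2 = n ^ 2 - 4)%N by rewrite divnK.
have d_range : d \in index_iota 1 (n ^ 2).
  rewrite mem_index_iota; apply/andP; split.
    by move: (sqrn_sub4_gt0 n_gt2); rewrite -dv muln_gt0 => /andP[].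
  by rewrite (leq_ltn_trans (leq_div _ _)) // ltn_subrL; nia.
rewrite /betaP_term (bigD1_seq _ d_range) ?iota_uniq //= dv eqxx.
rewrite [X in _ + X]big1_seq ?addr0 // => d' /andP[d'_neq _].
by rewrite -dv eqn_pmul2r ?expn_gt0 ?v_gt0 // (negbTE d'_neq).
Qed.

Lemma betaP_term_eq0 P n v : ~~ (v ^ 2 %| n ^ 2 - 4)%N -> betaP_term P n v = 0.
Proof.
move=> v_ndvd; rewrite /betaP_term big1 // => d _.
by case: ifP => // /andP[/eqP dv _]; move: v_ndvd; rewrite -dv dvdn_mull.
Qed.

Lemma betaLoc_term_logn p n v d : (2 < n)%N -> prime p -> (0 < v)%N ->
  (d * v ^ 2 = n ^ 2 - 4)%N ->
  betaLoc_term p n (logn p v) =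
    if (p == 2) ==> is_disc d then ((p ^ logn p v)%:R)^-1 * efac d p else 0.
Proof.
move=> n_gt2 p_pr v_gt0 dv; have [w co_pw vE] := pfactor_coprime p_pr v_gt0.
have p_ndvd_w : ~~ (p %| w)%N by rewrite -prime_coprime.
have quotE : ((n ^ 2 - 4) %/ p ^ (2 * logn p v) = d * w ^ 2)%N.
  rewrite -dv {1}vE expnMn mulnA -expnM (mulnC _ 2) mulnK //.
  by rewrite expn_gt0 prime_gt0.
have p_dvd : (p ^ (2 * logn p v) %| n ^ 2 - 4)%N.
  by rewrite -dv dvdn_mull // mulnC expnM dvdn_exp2r // pfactor_dvdnn.
rewrite /betaLoc_term IindE // p_dvd quotE /efac chi_mulsq // (is_discE n_gt2 dv).
case: eqP => [p2 | _] //=; subst p.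
by rewrite quotE mulsq_odd_mod4 //; move: p_ndvd_w; rewrite dvdn2 negbK.
Qed.

Lemma betaP_term_prod P n v :
  (2 <= P)%N -> (2 < n)%N -> [pred q | (q <= P)%N].-nat v ->
  betaP_term P n v = \prod_(p < P.+1 | prime p) betaLoc_term p n (logn p v).
Proof.
move=> P_ge2 n_gt2 v_smooth; have /andP[v_gt0 _] := v_smooth.
have [v_dvd | v_ndvd] := boolP (v ^ 2 %| n ^ 2 - 4)%N; last first.
  move: (v_ndvd); rewrite (sqr_dvdn_logn _ v_smooth) negb_forall.
  case/existsP=> p; rewrite negb_imply => /andP[p_pr p_ndvd].
  rewrite betaP_term_eq0 // (bigD1 p) //= /betaLoc_term IindE //.
  by rewrite (negbTE p_ndvd) mul0r.
rewrite betaP_termE //; set d := (_ %/ _)%N.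
have dv : (d * v ^ 2 = n ^ 2 - 4)%N by rewrite divnK.
rewrite (eq_bigr _ (fun p p_pr => betaLoc_term_logn n_gt2 p_pr v_gt0 dv)).
case: ifP => _; last first.
  by rewrite (bigD1 (inord 2)) ?inordK //= mul0r.
under eq_bigr do rewrite implybT.
rewrite big_split; congr (_ * _).
by rewrite prodfV -natr_prod -(prod_primes_logn v_smooth).
Qed.

Lemma betaLoc_term_support P n (e : 'I_P.+1 -> nat) : (2 < n)%N ->
  (forall p : 'I_P.+1, prime p -> betaLoc_term p n (e p) != 0) ->
  (\prod_(p < P.+1 | prime p) p ^ e p < n ^ 2)%N.
Proof.
move=> n_gt2 e_nz; set v := (\prod_(_ < _ | _) _)%N.
have v_smooth : [pred q | (q <= P)%N].-nat v by exact: pnat_prod_primes.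
have /andP[v_gt0 _] := v_smooth.
have v_dvd : (v ^ 2 %| n ^ 2 - 4)%N.
  rewrite (sqr_dvdn_logn _ v_smooth); apply/forallP => p; apply/implyP => p_pr.
  rewrite logn_prod_primes //; apply: contraR (e_nz p p_pr) => p_ndvd.
  by rewrite /betaLoc_term IindE // (negbTE p_ndvd).
have v_le : (v <= v ^ 2)%N by rewrite leq_pmulr.
apply: leq_ltn_trans v_le (leq_ltn_trans (dvdn_leq (sqrn_sub4_gt0 n_gt2) v_dvd) _).
by rewrite ltn_subrL; nia.
Qed.

Theorem lemma4p1 (P n : nat) : (2 <= P)%N -> (2 < n)%N ->
  betaP P n = \prod_(p < P.+1 | prime p) betaLoc p n.
Proof.
move=> P_ge2 n_gt2.
rewrite betaP_smooth ?(ltn_trans _ n_gt2) //.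
rewrite (eq_bigr _ (fun v => betaP_term_prod P_ge2 n_gt2)).
rewrite -(@prod_sum_smooth _ _ _ (fun p b => betaLoc_term p n b)) => [|e]; last first.
  exact: betaLoc_term_support.
by apply: eq_bigr => p _; rewrite /betaLoc big_mkord.
Qed.
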